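(* Let $L\in\mathbb Z^+$ and let $\mathcal C$ be a linear $[n,k]$ MDS code over $F$ with $k<n$ and $k/n\ge 1-\frac1L$; let $H$ be an $(n-k)\times n$ parity-check matrix of $\mathcal C$. Then $\mathcal C$ is lightly-$L$-MDS if and only if $\det\big(M_{J_0,J_1,\dots,J_L}(H)\big)\neq0$ for every collection of $L+1$ pairwise disjoint subsets $J_0,J_1,\dots,J_L\subseteq\{1,\dots,n\}$ satisfying (S1) $|J_m|\le n-k$ for all $m\in\{0,\dots,L\}$, and (S2) $\sum_{m=0}^{L}|J_m|=L(n-k)$.
   Context: $F=\mathrm{GF}(q)$; $\mathsf w(\cdot)$ is Hamming weight. For a matrix $H$ with columns indexed by $\{1,\dots,n\}$ and $J\subseteq\{1,\dots,n\}$, $(H)_J$ denotes the submatrix of columns indexed by $J$. For subsets $J_0,\dots,J_L$, $M_{J_0,\dots,J_L}(H)$ is the block matrix with $L$ block rows and $L+1$ block columns, whose $m$-th block row ($m=1,\dots,L$) is $\big(-(H)_{J_0}\ \big|\ 0\ \cdots\ 0\ \big|\ (H)_{J_m}\ \big|\ 0\cdots 0\big)$, i.e., the first block column is $-(H)_{J_0}$ in every block row, and the block in block row $m$ and block column $m$ (block columns numbered $0,\dots,L$) is $(H)_{J_m}$, all other blocks being zero. Under (S2) it is square of order $L(n-k)$. A linear $[n,k,d]$ code $\mathcal C$ is lightly-$(\tau,L)$-list decodable ($L\in\mathbb Z^+$, nonnegative $\tau\in\frac{1}{L+1}\mathbb Z$) if there do not exist $L+1$ nonzero vectors $e_0,\dots,e_L\in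 F^n$, each of Hamming weight at most $d-1$, all in the same coset of $\mathcal C$, with pairwise disjoint supports and $\sum_{m=0}^L\mathsf w(e_m)\le(L+1)\tau$. The code is lightly-$L$-MDS if it is lightly-$\left(\frac{L(n-k)}{L+1},L\right)$-list decodable. *)

From HB Require Import structures.
From mathcomp Require Import all_boot all_order all_algebra all_field.
Set Implicit Arguments. Unset Strict Implicit. Unset Printing Implicit Defensive.
Import Order.TTheory GRing.Theory.
Local Open Scope ring_scope.

Section Defs.
Variables (F : finFieldType) (n r : nat).
(* H : parity-check matrix with r = n - k rows; the code is its kernel *)
Variable H : 'M[F]_(r, n).

Definition supp (c : 'rV[F]_n) : {set 'I_n} := [set i | c 0 i != 0].
Definition wt (c : 'rV[F]_n) : nat := #|supp c|.

Definition in_code (c : 'rV[F]_n) : bool := H *m c^T == 0.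

Definition is_MDS : Prop :=
  forall c : 'rV[F]_n, c != 0 -> in_code c -> (r + 1 <= wt c)%N.

(* lightly-(tau,L)-list decodable, for a code of minimum distance d;
   the parameter T stands for (L+1) * tau (a nonnegative integer). *)
Definition lightly_ld (d L T : nat) : Prop :=
  ~ exists e : 'I_L.+1 -> 'rV[F]_n,
      [/\ forall m, e m != 0,
          forall m, (wt (e m) <= d - 1)%N,
          forall m m', in_code (e m - e m'),
          forall m m', m != m' -> [disjoint supp (e m) & supp (e m')]
        & (\sum_(m < L.+1) wt (e m) <= T)%N].

(* lightly-L-MDS for an MDS code: d = n - k + 1 = r + 1,
   (L+1) tau = L (n - k) = L r. *)
Definition lightly_MDS (L : nat) : Prop := lightly_ld (r + 1) L (L * r).

Definition Hcols (J : {set 'I_n}) : 'M[F]_(r, #|J|) :=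
  colsub (fun j : 'I_#|J| => enum_val j) H.

(* The block matrix M_{J_0,...,J_L}(H) with L block rows and L+1 block
   columns, block row i (i < L, i.e. m = i+1) being
   ( -(H)_{J_0} | 0 ... | (H)_{J_{i+1}} | 0 ... ). *)
Definition Mblock (L : nat) (J : 'I_L.+1 -> {set 'I_n}) :
  'M[F]_(\sum_(i < L) r, \sum_(m < L.+1) #|J m|) :=
  \mxblock_(i < L, m < L.+1)
     (if val m == 0%N then - Hcols (J m)
      else if val m == i.+1 then Hcols (J m) else 0).

(* its square version (conform_mx returns Mblock itself whenever
   \sum_m #|J m| = L r, i.e. under (S2)) *)
Definition Msq (L : nat) (J : 'I_L.+1 -> {set 'I_n}) : 'M[F]_(\sum_(i < L) r) :=
  conform_mx 0 (Mblock J).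

End Defs.

From HB Require Import structures.
From mathcomp Require Import all_boot all_order all_algebra all_field.
From mathcomp Require Import zify.
Set Implicit Arguments. Unset Strict Implicit. Unset Printing Implicit Defensive.

(* A vector x = (x_0, ..., x_L) lies in the kernel of M_J(H) exactly when
   (H)_{J_m} x_m = (H)_{J_0} x_0 for every m.  Spreading each x_m out to the
   coordinates J_m therefore gives L + 1 vectors with pairwise disjoint supports,
   in one coset of C, of total weight at most L(n - k); since a nonzero codeword
   has weight > n - k, either all of them vanish or none does.  Hence a singular
   M_J yields a witness against light list decodability.  Conversely, the supports
   of such a witness can be enlarged to sets J_m satisfying (S1) and (S2), which
   is possible because k/n >= 1 - 1/L means L(n - k) <= n, and restricting the
   witness to the J_m gives a nonzero kernel vector of M_J. *)

Lemma card_bigcup_leq_sum n L (S : 'I_L -> {set 'I_n}) :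
  #|\bigcup_m S m| <= \sum_m #|S m|.
Proof.
elim/big_rec2: _ => [|m k U _ le]; first by rewrite cards0.
by rewrite (leq_trans (leq_card_setU (S m) U).1) ?leq_add2l.
Qed.

Lemma exists_disjoint_supersets n L r (S : 'I_L.+1 -> {set 'I_n}) :
  L * r <= n ->
  (forall m m', m != m' -> [disjoint S m & S m']) ->
  (forall m, #|S m| <= r) ->
  \sum_m #|S m| <= L * r ->
  exists J : 'I_L.+1 -> {set 'I_n},
   [/\ forall m, S m \subset J m,
       forall m m', m != m' -> [disjoint J m & J m'],
       forall m, #|J m| <= r
     & \sum_m #|J m| = L * r].
Proof.
move=> Ln; move Ed: (L * r - \sum_m #|S m|) => d.
elim: d S Ed => [|d IH] S Ed dS cS sS.
  by exists S; split=> //; apply/eqP; rewrite eqn_leq sS -subn_eq0 Ed.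
have lt_sum : \sum_m #|S m| < L * r by rewrite -subn_gt0 Ed.
have [a aU] : exists a, a \notin \bigcup_m S m.
  have : 0 < #|~: \bigcup_m S m|.
    have := cardsC (\bigcup_m S m); rewrite card_ord.
    have := card_bigcup_leq_sum S; lia.
  by case/card_gt0P => a; rewrite inE; exists a.
have aS m : a \notin S m by apply: contra aU => am; apply/bigcupP; exists m.
have [m0 small_m0] : exists m0, #|S m0| < r.
  apply/existsP; apply: contraLR lt_sum; rewrite negb_exists => /forallP full.
  have : \sum_(m < L.+1) r <= \sum_m #|S m|.
    by apply: leq_sum => m _; rewrite leqNgt full.
  rewrite sum_nat_const card_ord; nia.
pose S' m := if m == m0 then a |: S m else S m.
have sum_S' : \sum_m #|S' m| = (\sum_m #|S m|).+1.
  rewrite (bigD1 m0) //= [in RHS](bigD1 m0) //= /S' eqxx cardsU1 aS add1n addSn.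
  by congr (_ + _).+1; apply: eq_bigr => m /negbTE ->.
have dS' m m' : m != m' -> [disjoint S' m & S' m'].
  have disj_a m1 m2 : m1 != m2 -> [disjoint a |: S m1 & S m2].
    move=> ne; rewrite disjoints_subset subUset sub1set inE aS.
    by rewrite -disjoints_subset dS.
  rewrite /S'; case: (m =P m0) => [->|_]; case: (m' =P m0) => [->|_] //.
  - by rewrite eqxx.
  - exact: disj_a.
  - by move=> ne; rewrite disjoint_sym disj_a // eq_sym.
  - exact: dS.
case: (IH S') => //.
- by rewrite sum_S'; lia.
- by move=> m; rewrite /S'; case: eqP => [->|]; rewrite ?cardsU1 ?aS.
- by rewrite sum_S'.
move=> J [sub dJ cJ sJ]; exists J; split=> // m; apply: subset_trans (sub m).
by rewrite /S'; case: eqP => // _; apply: subsetUr.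
Qed.

Import Order.TTheory GRing.Theory.
Local Open Scope ring_scope.

Lemma det_conform_eq0P (F : fieldType) p q (A : 'M[F]_(p, q)) : q = p ->
  (\det (conform_mx (0 : 'M_p) A) == 0) <->
  exists2 v : 'cV[F]_q, v != 0 & A *m v = 0.
Proof.
move=> E; case: p / E A => A; rewrite conform_mx_id -det_tr.
have trmx_neq0 (w : 'cV[F]_q) : (w^T != 0) = (w != 0).
  by rewrite -(inj_eq (@trmx_inj _ _ _)) trmxK trmx0.
split=> [/det0P [v nz vA]|[v nz Av]].
  exists v^T; first by rewrite -trmx_neq0 trmxK.
  by apply: trmx_inj; rewrite trmx_mul trmxK vA trmx0.
by apply/det0P; exists v^T; rewrite ?trmx_neq0 // -trmx_mul Av trmx0.
Qed.

Section ColumnSelection.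
Variables (F : finFieldType) (n : nat).

Definition sel_mx (J : {set 'I_n}) : 'M[F]_(#|J|, n) :=
  \matrix_(t, i) ((enum_val t == i)%:R).

Definition restrict (J : {set 'I_n}) (c : 'rV[F]_n) : 'cV[F]_#|J| :=
  sel_mx J *m c^T.

Definition spread (J : {set 'I_n}) (y : 'cV[F]_#|J|) : 'rV[F]_n :=
  y^T *m sel_mx J.

Lemma Hcols_sel r (H : 'M[F]_(r, n)) (J : {set 'I_n}) :
  Hcols H J = H *m (sel_mx J)^T.
Proof.
apply/matrixP => a t; rewrite !mxE (bigD1 (enum_val t)) //= big1 ?addr0.
  by rewrite !mxE eqxx mulr1.
by move=> i /negbTE ne; rewrite !mxE eq_sym ne mulr0.
Qed.

Lemma sel_mx_mulT (J : {set 'I_n}) : sel_mx J *m (sel_mx J)^T = 1%:M.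
Proof.
apply/matrixP => t s; rewrite !mxE (bigD1 (enum_val t)) //= big1 ?addr0.
  by rewrite !mxE eqxx mul1r (inj_eq enum_val_inj) eq_sym.
by move=> i /negbTE ne; rewrite !mxE eq_sym ne mul0r.
Qed.

Lemma supp_spread (J : {set 'I_n}) (y : 'cV[F]_#|J|) : supp (spread y) \subset J.
Proof.
apply/subsetP => i; rewrite inE; apply: contraNT => iJ; rewrite !mxE big1 //.
move=> t _; rewrite !mxE; case: eqP => [e|]; last by rewrite mulr0.
by case/negP: iJ; rewrite -e enum_valP.
Qed.

Lemma spread_eq0 (J : {set 'I_n}) (y : 'cV[F]_#|J|) :
  (spread y == 0) = (y == 0).
Proof.
apply/eqP/eqP => [y0|->]; last by rewrite /spread trmx0 mul0mx.
have : spread y *m (sel_mx J)^T = 0 by rewrite y0 mul0mx.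
by rewrite -mulmxA sel_mx_mulT mulmx1 => /(congr1 trmx); rewrite trmxK trmx0.
Qed.

Lemma restrictK (J : {set 'I_n}) (c : 'rV[F]_n) :
  supp c \subset J -> spread (restrict J c) = c.
Proof.
move=> sJ; apply/matrixP => z i; rewrite ord1 !mxE.
have restrictE t : restrict J c t 0 = c 0 (enum_val t).
  rewrite !mxE (bigD1 (enum_val t)) //= big1 ?addr0; first by rewrite !mxE eqxx mul1r.
  by move=> j /negbTE ne; rewrite !mxE eq_sym ne mul0r.
under eq_bigr do rewrite mxE restrictE [sel_mx _ _ _]mxE.
have [iJ|iJ] := boolP (i \in J).
  rewrite (bigD1 (enum_rank_in iJ i)) //= enum_rankK_in // eqxx mulr1 big1 ?addr0 //.
  move=> t ne; case: eqP => [e|]; last by rewrite mulr0.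
  by case/eqP: ne; apply: enum_val_inj; rewrite enum_rankK_in.
have -> : c 0 i = 0.
  by apply/eqP; apply: contraNT iJ => nz; apply: (subsetP sJ); rewrite inE.
rewrite big1 // => t _; case: eqP => [e|]; last by rewrite mulr0.
by case/negP: iJ; rewrite -e enum_valP.
Qed.

Lemma syndrome_spread r (H : 'M[F]_(r, n)) (J : {set 'I_n}) (y : 'cV[F]_#|J|) :
  H *m (spread y)^T = Hcols H J *m y.
Proof. by rewrite trmx_mul trmxK Hcols_sel mulmxA. Qed.

End ColumnSelection.

Section BlockMatrix.
Variables (F : finFieldType) (n r : nat) (H : 'M[F]_(r, n)).

Lemma mul_Mblock_mxcol L (J : 'I_L.+1 -> {set 'I_n})
    (x : forall m : 'I_L.+1, 'cV[F]_#|J m|) :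
  Mblock H J *m \mxcol_m x m =
  \mxcol_(i < L) (Hcols H (J (lift ord0 i)) *m x (lift ord0 i)
                  - Hcols H (J ord0) *m x ord0).
Proof.
rewrite /Mblock mul_mxblock_mxrow; apply: eq_mxcol => i.
rewrite big_ord_recl /= mulNmx addrC; congr (_ + _).
rewrite (bigD1 i) //= eqxx big1 ?addr0 // => j /negbTE ne.
by rewrite eqSS (val_eqE j i) ne mul0mx.
Qed.

Lemma Mblock_mxcol_eq0 L (J : 'I_L.+1 -> {set 'I_n})
    (x : forall m : 'I_L.+1, 'cV[F]_#|J m|) :
  Mblock H J *m \mxcol_m x m = 0 <->
  forall m, Hcols H (J m) *m x m = Hcols H (J ord0) *m x ord0.
Proof.
rewrite mul_Mblock_mxcol -mxcol0; split=> [/eq_mxcolP eqx m|eqx].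
  have [i ->|->] := unliftP ord0 m; last by [].
  by apply/eqP; rewrite -subr_eq0; apply/eqP/eqx.
by apply/eq_mxcolP => i; apply/eqP; rewrite subr_eq0 eqx.
Qed.

Lemma MDS_low_weight_eq0 (c : 'rV[F]_n) :
  is_MDS H -> in_code H c -> (wt c <= r)%N -> c = 0.
Proof.
move=> mds cC; apply: contraTeq => nz; rewrite -ltnNge.
by have := mds c nz cC; rewrite addn1.
Qed.

End BlockMatrix.

Section LightlyMDS.
Variables (F : finFieldType) (n r : nat) (H : 'M[F]_(r, n)) (L : nat).

Lemma sum_card_eq_block_size (J : 'I_L.+1 -> {set 'I_n}) :
  (\sum_m #|J m| = L * r)%N -> (\sum_m #|J m| = \sum_(i < L) r)%N.
Proof. by rewrite sum_nat_const card_ord. Qed.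

Lemma det_Msq_neq0_of_lightly_MDS (J : 'I_L.+1 -> {set 'I_n}) :
  is_MDS H -> lightly_MDS H L ->
  (forall m m', m != m' -> [disjoint J m & J m']) ->
  (forall m, #|J m| <= r)%N ->
  (\sum_m #|J m| = L * r)%N ->
  \det (Msq H J) != 0.
Proof.
move=> mds lMDS dJ cJ sJ; apply/negP.
case/(det_conform_eq0P _ (sum_card_eq_block_size sJ)) => v nz_v.
rewrite -(submxcolK v) Mblock_mxcol_eq0 => same_syndrome.
pose e m := spread (submxcol v m).
have syndrome_e m : H *m (e m)^T = H *m (e ord0)^T.
  by rewrite !syndrome_spread same_syndrome.
have wt_e m : (wt (e m) <= #|J m|)%N by apply/subset_leq_card/supp_spread.
apply: lMDS; exists e; split.
- move=> m; apply: contraNneq nz_v => em0.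
  have e0 m' : e m' = 0.
    apply: (MDS_low_weight_eq0 mds); last exact: leq_trans (wt_e m') (cJ m').
    by rewrite /in_code syndrome_e -(syndrome_e m) em0 trmx0 mulmx0.
  by apply/eqP/mxcolP => m'; apply/eqP; rewrite submxcol0 -spread_eq0 -/(e m') e0.
- by move=> m; rewrite addnK (leq_trans (wt_e m) (cJ m)).
- by move=> m m'; rewrite /in_code linearB /= mulmxBr !syndrome_e subrr.
- move=> m m' ne; apply: disjointWl (supp_spread _) _.
  by apply: disjointWr (supp_spread _) _; apply: dJ.
- by rewrite -sJ; apply: leq_sum => m _; apply: wt_e.
Qed.

Lemma lightly_MDS_of_det_Msq_neq0 :
  (L * r <= n)%N ->
  (forall J : 'I_L.+1 -> {set 'I_n},
     (forall m m', m != m' -> [disjoint J m & J m']) ->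
     (forall m, #|J m| <= r)%N ->
     (\sum_m #|J m| = L * r)%N ->
     \det (Msq H J) != 0) ->
  lightly_MDS H L.
Proof.
move=> Lrn det_neq0 [e [nz_e wt_e coset_e disj_e sum_e]].
have wt_e' m : (#|supp (e m)| <= r)%N by have := wt_e m; rewrite addnK.
have [J [sub dJ cJ sJ]] := exists_disjoint_supersets Lrn disj_e wt_e' sum_e.
move/negP: (det_neq0 J dJ cJ sJ); apply.
apply/(det_conform_eq0P _ (sum_card_eq_block_size sJ)).
exists (\mxcol_m restrict (J m) (e m)).
  apply: contraNneq (nz_e ord0) => /(congr1 (fun A => submxcol A ord0)).
  by rewrite mxcolK submxcol0 => r0; rewrite -(restrictK (sub ord0)) r0 spread_eq0.
apply/Mblock_mxcol_eq0 => m.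
rewrite -!syndrome_spread (restrictK (sub m)) (restrictK (sub ord0)).
by apply/eqP; rewrite -subr_eq0 -mulmxBr -linearB; apply: coset_e.
Qed.

End LightlyMDS.

Theorem mainTheorem13 (F : finFieldType) (n k L : nat)
    (H : 'M[F]_(n - k, n)) :
  (0 < L)%N -> (k < n)%N ->
  ((L - 1) * n <= L * k)%N ->            (* k/n >= 1 - 1/L *)
  \rank H = (n - k)%N ->                 (* H is a parity-check matrix of an [n,k] code *)
  is_MDS H ->
  (lightly_MDS H L <->
   forall J : 'I_L.+1 -> {set 'I_n},
     (forall m m', m != m' -> [disjoint J m & J m']) ->
     (forall m, (#|J m| <= n - k)%N) ->
     (\sum_(m < L.+1) #|J m| = L * (n - k))%N ->
     \det (Msq H J) != 0).
Proof.
move=> _ _ rate _ mds.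
have Lrn : (L * (n - k) <= n)%N by move: rate; rewrite mulnBr mulnBl mul1n; lia.
split=> [lMDS J|]; first exact: det_Msq_neq0_of_lightly_MDS.
exact: lightly_MDS_of_det_Msq_neq0.
Qed.
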